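(* For all integers $j\ge1$ and $k\ge0$, $$\sum_{i=0}^k(-1)^i\binom{k}{i}\binom{i/2}{j}=(-1)^j2^{k-2j}\frac{k}{j}\binom{2j-k-1}{j-k}.$$ (Moreover, for $j=k=0$ the sum equals $1$.)
   Context: For real $x$ and integer $m$: $\binom{x}{m}=x(x-1)\cdots(x-m+1)/m!$ if $m\ge1$, $\binom{x}{0}=1$, and $\binom{x}{m}=0$ if $m<0$. *)

From mathcomp Require Import all_boot all_order all_algebra.
Set Implicit Arguments. Unset Strict Implicit. Unset Printing Implicit Defensive.
Import Order.TTheory GRing.Theory Num.Theory.
Local Open Scope ring_scope.

Definition gbinom (R : fieldType) (x : R) (m : int) : R :=
  match m with
  | Posz n => (\prod_(i < n) (x - i%:R)) / (n`!)%:R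
  | Negz _ => 0
  end.

(* Write a(j, k) for the left-hand side. The k-th alternating binomial sum
   satisfies D(k+2) f = 2 D(k+1) f + D(k) (f(. + 2) - f), and shifting i by 2
   shifts i/2 by 1, so Pascal's rule binom(x+1, j+1) = binom(x, j+1) + binom(x, j)
   gives a(j+1, k+2) = 2 a(j+1, k+1) + a(j, k). The right-hand side equals
   (-1)^j 2^k 4^-j (C(2j-k-1, j-1) - C(2j-k-1, j)), and this difference of
   binomials obeys the same recurrence by Pascal's rule; the initial values
   k = 0, 1 reduce to binom(1/2, j) = (-1)^(j-1) 2 4^-j C(2j-2, j-1) / j. *)

From mathcomp Require Import all_boot all_order all_algebra.
From mathcomp Require Import ring zify.
Set Implicit Arguments. Unset Strict Implicit. Unset Printing Implicit Defensive.
Import Order.TTheory GRing.Theory Num.Theory.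
Local Open Scope ring_scope.

Section AltBinomSum.
Variable R : comPzRingType.

Definition alt_binom_sum k (f : nat -> R) :=
  \sum_(i < k.+1) (-1) ^+ i * 'C(k, i)%:R * f i.

Lemma eq_alt_binom_sum k f g : f =1 g -> alt_binom_sum k f = alt_binom_sum k g.
Proof. by move=> fg; apply: eq_bigr => i _; rewrite fg. Qed.

Lemma alt_binom_sumD k f g :
  alt_binom_sum k (fun i => f i + g i) = alt_binom_sum k f + alt_binom_sum k g.
Proof. by rewrite -big_split; apply: eq_bigr => i _; rewrite mulrDr. Qed.

Lemma alt_binom_sumS k f :
  alt_binom_sum k.+1 f = alt_binom_sum k f - alt_binom_sum k (fun i => f i.+1).
Proof.
have shifted : alt_binom_sum k f
    = f 0%N + \sum_(i < k.+1) (-1) ^+ i.+1 * 'C(k, i.+1)%:R * f i.+1.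
  rewrite /alt_binom_sum big_ord_recl [in RHS]big_ord_recr /=.
  by rewrite (@bin_small k k.+1) // mulr0 mul0r addr0 expr0 bin0 !mul1r.
rewrite shifted /alt_binom_sum big_ord_recl /= expr0 bin0 !mul1r -addrA.
rewrite -sumrB; congr (_ + _); apply: eq_bigr => i _.
by rewrite /bump /= binS natrD exprS; ring.
Qed.

Lemma alt_binom_sum_const1 k : alt_binom_sum k (fun=> 1) = (k == 0%N)%:R.
Proof.
case: k => [|k]; first by rewrite /alt_binom_sum big_ord1 expr0 bin0 !mul1r.
by rewrite alt_binom_sumS subrr.
Qed.

Lemma alt_binom_sum_rec2 k f g : (forall i, f i.+2 = f i + g i) ->
  alt_binom_sum k.+2 f = 2 * alt_binom_sum k.+1 f + alt_binom_sum k g.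
Proof.
move=> fS; rewrite !alt_binom_sumS (eq_alt_binom_sum k fS) alt_binom_sumD.
ring.
Qed.

End AltBinomSum.

Lemma natrS_neq0 {R : numDomainType} n : n.+1%:R != 0 :> R.
Proof. by rewrite pnatr_eq0. Qed.

Section GeneralizedBinomial.
Variable R : numFieldType.
Implicit Types (x : R) (n m : nat).

Lemma fact_natr_neq0 n : n`!%:R != 0 :> R.
Proof. by rewrite pnatr_eq0 -lt0n fact_gt0. Qed.

Lemma gbinom0 x : gbinom x 0 = 1.
Proof. by rewrite /gbinom /= big_ord0 divr1. Qed.

Lemma gbinomSr x n : gbinom x n.+1 = gbinom x n * (x - n%:R) / n.+1%:R.
Proof.
rewrite /gbinom big_ord_recr factS natrM invfM /=.
by field; rewrite addrC natr1 natrS_neq0 fact_natr_neq0.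
Qed.

Lemma gbinom0S n : gbinom 0 n.+1 = 0 :> R.
Proof. by rewrite /gbinom big_ord_recl subrr !mul0r. Qed.

Lemma gbinomD1 x n : gbinom (x + 1) n.+1 = gbinom x n.+1 + gbinom x n.
Proof.
have prod_shift : \prod_(i < n.+1) (x + 1 - i%:R) = (x + 1) * \prod_(i < n) (x - i%:R).
  rewrite big_ord_recl subr0; congr (_ * _); apply: eq_bigr => i _.
  by rewrite lift0 -natr1 opprD addrACA subrr addr0.
rewrite [gbinom x n.+1]gbinomSr /gbinom /= prod_shift factS natrM invfM.
by field; rewrite addrC natr1 natrS_neq0 fact_natr_neq0.
Qed.

Lemma gbinom_nat n m : gbinom n%:R m = 'C(n, m)%:R :> R.
Proof.
have prod_ffact : \prod_(i < m) (n%:R - i%:R) = (n ^_ m)%:R :> R.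
  elim: m => [|m IH]; first by rewrite big_ord0 ffactn0.
  rewrite big_ord_recr /= IH ffactnSr natrM.
  case: (leqP m n) => [le_mn | lt_nm]; first by rewrite natrB.
  by rewrite !ffact_small // !mul0r.
by rewrite /gbinom prod_ffact -bin_ffact natrM mulfK // fact_natr_neq0.
Qed.

End GeneralizedBinomial.

Lemma bin_odd_mid j : 'C((2 * j).+1, j.+1) = 'C((2 * j).+1, j).
Proof. by rewrite -bin_sub; [congr binomial | ]; lia. Qed.

Lemma central_binS j : (j.+1 * 'C(2 * j.+1, j.+1) = 2 * (2 * j).+1 * 'C(2 * j, j))%N.
Proof.
have := mul_bin_diag (2 * j).+1 j; rewrite /= => diag.
rewrite (_ : 2 * j.+1 = (2 * j).+2)%N; last by lia.
by rewrite -mulnA diag binS -bin_odd_mid; lia.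
Qed.

Section HalfSum.
Variable R : numFieldType.
Implicit Types (j k : nat).

Lemma exp4_neq0 j : 4 ^+ j != 0 :> R.
Proof. by rewrite expf_neq0 // natrS_neq0. Qed.

Lemma gbinom_half j :
  gbinom (1 / 2 : R) j.+1 = (-1) ^+ j * 2 / 4 ^+ j.+1 * ('C(2 * j, j)%:R / j.+1%:R).
Proof.
elim: j => [|j IH]; first by rewrite gbinomSr gbinom0 bin0 expr0 expr1; field.
have central : 'C(2 * j.+1, j.+1)%:R = 2 * (2 * j).+1%:R * 'C(2 * j, j)%:R / j.+1%:R :> R.
  by rewrite -!natrM -central_binS natrM [_ * 'C(_, _)%:R]mulrC mulfK ?natrS_neq0.
rewrite gbinomSr IH central !exprS -[(2 * j).+1%:R]natr1 -[j.+2%:R]natr1 -[j.+1%:R]natr1 natrM.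
by field; rewrite !natr1 !natrS_neq0 exp4_neq0.
Qed.

Definition alt_half_sum j k := alt_binom_sum k (fun i => gbinom (i%:R / 2 : R) j).

Lemma alt_half_sum_rec j k :
  alt_half_sum j.+1 k.+2 = 2 * alt_half_sum j.+1 k.+1 + alt_half_sum j k.
Proof.
apply: alt_binom_sum_rec2 => i; rewrite -gbinomD1 -addn2 natrD mulrDl.
by rewrite divff ?natrS_neq0.
Qed.

Lemma alt_half_sum0 k : alt_half_sum 0 k = (k == 0%N)%:R.
Proof.
by rewrite -alt_binom_sum_const1; apply: eq_alt_binom_sum => i; rewrite gbinom0.
Qed.

Lemma alt_half_sum_k0 j : alt_half_sum j.+1 0 = 0.
Proof. by rewrite /alt_half_sum /alt_binom_sum big_ord1 [_%:R / 2]mul0r gbinom0S mulr0. Qed.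

Lemma alt_half_sum_k1 j : alt_half_sum j.+1 1 = - gbinom (1 / 2) j.+1.
Proof.
rewrite /alt_half_sum /alt_binom_sum big_ord_recr big_ord1 [_%:R / 2]mul0r gbinom0S.
by rewrite mulr0 /= add0r expr1 binn mulr1 mulN1r.
Qed.

(* For k <= j this is (k/j) C(2j-k-1, j-k) (see ballotE), written as a
   difference so that Pascal's rule applies. *)
Definition ballot j k : R :=
  if (k <= j)%N then 'C(2 * j - k - 1, j - 1)%:R - 'C(2 * j - k - 1, j)%:R else 0.

Lemma ballot_k0 j : ballot j.+1 0 = 0.
Proof.
rewrite /ballot leq0n subn0 subSS subn0 (_ : 2 * j.+1 - 1 = (2 * j).+1)%N; last by lia.
by rewrite bin_odd_mid subrr.
Qed.

Lemma ballot_k1 j : ballot j.+1 1 = 'C(2 * j, j)%:R / j.+1%:R.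
Proof.
rewrite /ballot ltn0Sn subSS subn0 (_ : 2 * j.+1 - 1 - 1 = 2 * j)%N; last by lia.
have := mul_bin_left (2 * j) j; rewrite (_ : 2 * j - j = j)%N; last by lia.
move/(congr1 (fun n => n%:R : R)); rewrite !natrM => left_bin.
rewrite -(mulKf (natrS_neq0 j) 'C(2 * j, j.+1)%:R) left_bin -[j.+1%:R]natr1.
by field; rewrite natr1 pnatr_eq0.
Qed.

Lemma ballot_rec j k : ballot j.+2 k.+2 = ballot j.+2 k.+1 - ballot j.+1 k.
Proof.
rewrite /ballot; case: (ltngtP k j.+1) => [lt_kj | lt_jk | ->].
- rewrite !ifT; try lia.
  rewrite (_ : 2 * j.+2 - k.+2 - 1 = (2 * j - k).+1)%N; last by lia.
  rewrite (_ : 2 * j.+2 - k.+1 - 1 = (2 * j - k).+2)%N; last by lia.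
  rewrite (_ : 2 * j.+1 - k - 1 = (2 * j - k).+1)%N; last by lia.
  by rewrite !subSS !subn0 (binS _ j.+1) (binS _ j) !natrD; ring.
- by rewrite !ifF ?subrr //; lia.
- rewrite ifF; last by lia.
  rewrite !ifT; try lia.
  rewrite (_ : 2 * j.+2 - j.+2 - 1 = j.+1)%N; last by lia.
  rewrite (_ : 2 * j.+1 - j.+1 - 1 = j)%N; last by lia.
  by rewrite !subSS !subn0 !binn !bin_small // !subr0 subrr.
Qed.

Definition half_sum_closed j k : R := (-1) ^+ j * 2 ^+ k / 4 ^+ j * ballot j k.

Lemma half_sum_closed_k0 j : half_sum_closed j.+1 0 = 0.
Proof. by rewrite /half_sum_closed ballot_k0 mulr0. Qed.

Lemma half_sum_closed_k1 j : half_sum_closed j.+1 1 = - gbinom (1 / 2) j.+1.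
Proof.
rewrite /half_sum_closed ballot_k1 gbinom_half exprS expr1.
by field; rewrite addrC natr1 pnatr_eq0 exp4_neq0.
Qed.

Lemma half_sum_closed_rec j k :
  half_sum_closed j.+2 k.+2 = 2 * half_sum_closed j.+2 k.+1 + half_sum_closed j.+1 k.
Proof.
rewrite /half_sum_closed ballot_rec !exprS.
by field; rewrite exp4_neq0.
Qed.

Lemma half_sum_closed1_rec k :
  half_sum_closed 1 k.+2 = 2 * half_sum_closed 1 k.+1 + (k == 0%N)%:R.
Proof.
rewrite /half_sum_closed /ballot; case: k => [|k] /=.
  by rewrite bin0 bin_small // !expr1; field.
by rewrite !mulr0 addr0.
Qed.

Lemma alt_half_sum_closed j k : alt_half_sum j.+1 k = half_sum_closed j.+1 k.
Proof.
suff both : forall j, alt_half_sum j.+1 k = half_sum_closed j.+1 k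
                   /\ alt_half_sum j.+1 k.+1 = half_sum_closed j.+1 k.+1.
  exact: (both j).1.
elim: k {j} => [|k IH] j.
  by rewrite alt_half_sum_k0 half_sum_closed_k0 alt_half_sum_k1 half_sum_closed_k1.
split; first exact: (IH j).2.
rewrite alt_half_sum_rec; case: j => [|j].
  by rewrite alt_half_sum0 half_sum_closed1_rec (IH 0%N).2.
by rewrite half_sum_closed_rec (IH j.+1).2 (IH j).1.
Qed.

Lemma ballotE j k : (k <= j.+1)%N ->
  ballot j.+1 k = k%:R / j.+1%:R * 'C(2 * j.+1 - k - 1, j.+1 - k)%:R.
Proof.
move=> le_kj; rewrite /ballot le_kj subSS subn0.
set n := (2 * j.+1 - k - 1)%N.
have mid : 'C(n, j.+1 - k) = 'C(n, j) by rewrite -bin_sub /n; [congr binomial |]; lia.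
have := mul_bin_left n j; rewrite (_ : n - j = j.+1 - k)%N; last by rewrite /n; lia.
move/(congr1 (fun m => m%:R : R)); rewrite !natrM natrB // => left_bin.
rewrite mid -(mulKf (natrS_neq0 j) 'C(n, j.+1)%:R) left_bin.
by field; rewrite addrC natr1 pnatr_eq0.
Qed.

End HalfSum.

Lemma expr2z_sub_double (R : numFieldType) k j :
  (2 : R) ^ (Posz k - 2 * Posz j) = 2 ^+ k / 4 ^+ j.
Proof.
rewrite (_ : Posz k - 2 * Posz j = Posz k + - Posz (2 * j)); last by lia.
rewrite expfzDr ?natrS_neq0 // -invr_expz -!exprnP exprM.
by rewrite (_ : (2 : R) ^+ 2 = 4) // expr2 -natrM.
Qed.

Theorem mainTheorem3 (R : realFieldType) :
  (forall j k : nat, (1 <= j)%N ->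
    \sum_(i < k.+1) (-1) ^+ i * ('C(k, i))%:R * gbinom ((i%:R : R) / 2) (Posz j)
    = (-1) ^+ j * (2 : R) ^ (Posz k - 2 * Posz j) * (k%:R / j%:R)
      * gbinom ((2 * Posz j - Posz k - 1)%:~R) (Posz j - Posz k))
  /\
  \sum_(i < 1) (-1) ^+ i * ('C(0, i))%:R * gbinom ((i%:R : R) / 2) (Posz 0) = 1.
Proof.
split; last by rewrite big_ord1 expr0 bin0 !mul1r gbinom0.
move=> [//|j] k _.
rewrite -[LHS]/(alt_half_sum R j.+1 k) alt_half_sum_closed /half_sum_closed.
rewrite expr2z_sub_double.
have [le_kj | lt_jk] := leqP k j.+1.
- rewrite ballotE // subzn // (_ : 2 * Posz j.+1 - Posz k - 1 = Posz (2 * j.+1 - k - 1)); last by lia.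
  by rewrite gbinom_nat; ring.
- rewrite /ballot ifF; last by lia.
  by rewrite (_ : Posz j.+1 - Posz k = Negz (k - j.+2)) ?mulr0 // NegzE; lia.
Qed.
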